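(* Let $G$ be a finite supersolvable group and $A$ a conjugacy class of $G$. Then $$\operatorname{dl}(G/\mathbf{C}_G(A))\le 2\,\eta(AA^{-1})-1.$$
   Context: For a nonempty subset $X\subseteq G$ that is $G$-invariant (i.e. $g^{-1}Xg=X$ for all $g\in G$), $\eta(X)$ denotes the number of distinct conjugacy classes of $G$ whose union is $X$. For conjugacy classes $A,B$, $AB=\{ab\mid a\in A,b\in B\}$ and $A^{-1}=\{a^{-1}\mid a\in A\}$, so $AA^{-1}=\{ab^{-1}\mid a,b\in A\}$, which is $G$-invariant. $\mathbf{C}_G(A)=\{g\in G\mid g^{-1}ag=a\text{ for all }a\in A\}$. $\operatorname{dl}$ denotes derived length. *)

From mathcomp Require Import all_boot all_order all_fingroup all_solvable.
Set Implicit Arguments. Unset Strict Implicit. Unset Printing Implicit Defensive.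
Import GroupScope.

Definition supersolvable (gT : finGroupType) (G : {group gT}) : Prop :=
  exists s : seq {group gT},
    [/\ last 1%G s = G,
        all (fun H : {group gT} => H <| G) s &
        path (fun H K : {group gT} => (H \subset K) && cyclic (K / H)) 1%G s].

(* derived length: least n with H^`(n) = 1 (H^`(0) = H); for solvable H this
   is at most #|H|. *)
Definition dl (gT : finGroupType) (H : {set gT}) : nat :=
  find (fun n => H^`(n) == 1) (iota 0 #|H|.+1).

(* eta G X = number of conjugacy classes of G contained in X
   (= number of classes whose union is X when X is G-invariant). *)
Definition eta (gT : finGroupType) (G : {group gT}) (X : {set gT}) : nat :=
  #|[set C in classes G | C \subset X]|.

From mathcomp Require Import all_boot all_order all_fingroup all_solvable.
From mathcomp Require Import zify.
Set Implicit Arguments. Unset Strict Implicit. Unset Printing Implicit Defensive.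
Import GroupScope.

(* Take a chain 1 = G_0 <= ... <= G_n = G of normal subgroups with cyclic
   factors and, for M in the chain, let eta_M be the number of classes of G/M
   contained in the image of A A^-1 (the sets C M of [eta_mod] are their
   preimages).  Descending the chain, G^(2 eta_M - 1) acts trivially on A
   modulo M.  At a step M < N: if (A A^-1) :&: N <= M, the commutators [x, g]
   with x in A, being conjugate to x^g x^-1, already lie in M; otherwise
   eta_N < eta_M and two more derived steps are available.  As G' centralizes
   the cyclic normal section N/M, K = G^(k+1) centralizes N/M while moving A
   only inside cosets of N/M, so the three subgroup lemma makes K' centralize
   A modulo M.  For M = 1 this gives G^(2 eta - 1) <= C_G(A). *)

Lemma der_sub_le (gT : finGroupType) (G : {group gT}) m n :
  m <= n -> G^`(n) \subset G^`(m).
Proof.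
move=> le_mn; rewrite -(subnK le_mn); elim: (n - m) => //= k IHk.
by rewrite addSn (subset_trans (der_subS _ _) IHk).
Qed.

Lemma dl_le_der_trivg (gT : finGroupType) (H : {set gT}) n : H^`(n) = 1 -> dl H <= n.
Proof.
move=> Hn1; rewrite /dl; have [le_nH | lt_Hn] := leqP n #|H|.
  rewrite leqNgt; apply/negP => /(before_find 0).
  by rewrite nth_iota ?ltnS // add0n Hn1 eqxx.
by rewrite (leq_trans (find_size _ _)) ?size_iota.
Qed.

Lemma der1_sub_cent_cyclic (gT : finGroupType) (G N : {group gT}) :
  cyclic N -> G \subset 'N(N) -> G^`(1) \subset 'C(N).
Proof.
move=> cycN nNG; rewrite -ker_conj_aut ker_trivg_morphim.
rewrite (subset_trans (der_sub 1 G)) //= morphim_der // (derG1P _) //.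
exact: abelianS (Aut_conj_aut _ _) (Aut_cyclic_abelian cycN).
Qed.

Lemma der1_cent_of_comm_cent (gT : finGroupType) (H K : {group gT}) :
  [~: H, K] \subset 'C(K) -> K^`(1) \subset 'C(H).
Proof.
move=> cKHK; have cHKK : [~: H, K, K] :=: 1 by apply/commG1P.
have cKHK' : [~: K, H, K] :=: 1 by rewrite (commGC K H).
by apply/commG1P; rewrite -(three_subgroup cKHK' cHKK) derg1 commGC.
Qed.

Lemma commg_gen_sub (gT : finGroupType) (B : {set gT}) (K N : {group gT}) :
  B \subset 'N(N) -> K \subset 'N(N) -> ([~: <<B>>, K] \subset N) = ([~: B, K] \subset N).
Proof.
move=> nNB nNK; have nNgB : <<B>> \subset 'N(N) by rewrite gen_subG.
by rewrite -(quotient_cents2 nNgB nNK) -(quotient_cents2 nNB nNK) quotient_gen // gen_subG.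
Qed.

Section ClassesModulo.

Variables (gT : finGroupType) (G : {group gT}) (X : {set gT}).

Definition classes_in := [set C in classes G | C \subset X].

Definition eta_mod (M : {set gT}) := #|[set C * M | C in classes_in]|.

Lemma eta_mod1 : eta_mod 1 = eta G X.
Proof. by rewrite /eta_mod (eq_imset (g := id)) ?imset_id // => C; rewrite mulg1. Qed.

Lemma imset_mul_classes_in (M N : {group gT}) : M \subset N ->
  [set C * N | C in classes_in] = [set D * N | D in [set C * M | C in classes_in]].
Proof.
move=> sMN; rewrite -imset_comp; apply: eq_imset => C /=.
by rewrite -mulgA (mulGidPr sMN).
Qed.

Lemma eta_mod_leq (M N : {group gT}) : M \subset N -> eta_mod N <= eta_mod M.
Proof. by move=> sMN; rewrite /eta_mod (imset_mul_classes_in sMN) leq_imset_card. Qed.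

Lemma eta_mod_gt0 (M : {group gT}) : 1 \in X -> 0 < eta_mod M.
Proof.
move=> X1; apply/card_gt0P; exists (1 ^: G * M); apply: imset_f.
by rewrite inE class1G classes1 sub1set.
Qed.

Lemma eta_mod_ltn (M N : {group gT}) y :
    G \subset 'N(X) -> 1 \in X -> M \subset N -> N <| G ->
  y \in X :&: N -> y \notin M -> eta_mod N < eta_mod M.
Proof.
move=> nXG X1 sMN /andP[sNG nNG] /setIP[Xy Ny] My.
rewrite /eta_mod (imset_mul_classes_in sMN); set S := [set C * M | C in _].
have classM_S z : z \in X -> z \in G -> z ^: G * M \in S.
  by move=> Xz Gz; apply: imset_f; rewrite inE mem_classes // class_sub_norm.
have Gy := subsetP sNG y Ny.
rewrite ltn_neqAle leq_imset_card andbT; apply/negP => /imset_injP inj_S.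
have yGM : y ^: G * M = 1 ^: G * M.
  apply: inj_S; rewrite ?classM_S //.
  rewrite -!mulgA (mulGidPr sMN) class1G mul1g (mulSgGid (class_refl G y)) //.
  by rewrite class_sub_norm.
have := mem_mulg (class_refl G y) (group1 M).
by rewrite mulg1 yGM class1G mul1g (negbTE My).
Qed.

End ClassesModulo.

Section NormalSubset.

Variables (gT : finGroupType) (G : {group gT}) (A : {set gT}).
Hypotheses (sAG : A \subset G) (nAG : G \subset 'N(A)) (A_neq0 : A != set0).

Local Notation etaA := (eta_mod G (A * A^-1)).

Lemma norm_mulV : G \subset 'N(A * A^-1).
Proof.
apply: normsM => //; apply/normsP => g Gg; apply/setP => z.
by rewrite mem_conjg !mem_invg -conjVg -mem_conjg (normsP nAG).
Qed.

Lemma mem1_mulV : 1 \in A * A^-1.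
Proof.
by case/set0Pn: A_neq0 => x Ax; rewrite -(mulgV x) mem_mulg ?memV_invg.
Qed.

Lemma comm_sub_of_mulV_cap (M N : {group gT}) (H : {set gT}) :
    A \subset 'N(M) -> A \subset 'N(N) -> H \subset G ->
  A * A^-1 :&: N \subset M -> [~: A, H] \subset N -> [~: A, H] \subset M.
Proof.
move=> nMA nNA sHG sAAN_M sAHN; rewrite gen_subG.
apply/subsetP => _ /imset2P[x g Ax Hg ->].
have Nxg : [~ x, g] \in N := subsetP sAHN _ (mem_commg Ax Hg).
rewrite -(conjgKV x [~ x, g]) memJ_norm ?(subsetP nMA) //.
have nNx' : x^-1 \in 'N(N) by rewrite groupV (subsetP nNA).
apply: (subsetP sAAN_M); rewrite inE (memJ_norm _ nNx') Nxg andbT.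
have -> : [~ x, g] ^ x^-1 = x ^ g * x^-1.
  by rewrite conjgE invgK commgEl mulgA mulKVg.
by rewrite mem_mulg ?memV_invg // memJ_norm ?(subsetP nAG) ?(subsetP sHG).
Qed.

Lemma comm_der_cyclic_factor k (M N : {group gT}) :
    M <| G -> N <| G -> cyclic (N / M) ->
  [~: A, G^`(k)] \subset N -> [~: A, G^`(k.+2)] \subset M.
Proof.
move=> /andP[_ nMG] /andP[_ nNG] cycNM sAkN.
have nMder n : G^`(n) \subset 'N(M) := subset_trans (der_sub n G) nMG.
have nNMder n : (G / M)^`(n) \subset 'N(N / M).
  exact: subset_trans (der_sub n _) (quotient_norms _ nNG).
rewrite -quotient_cents2 ?(subset_trans sAG) // centsC quotient_der // -cent_gen.
apply: (der1_cent_of_comm_cent (H := <<A / M>>%G) (K := ((G / M)^`(k.+1))%G)).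
have cNM : N / M \subset 'C((G / M)^`(k.+1)).
  rewrite centsC (subset_trans (der_sub_le _ (isT : 1 <= k.+1))) //.
  exact: der1_sub_cent_cyclic cycNM (quotient_norms _ nNG).
apply: subset_trans cNM; rewrite commg_gen_sub ?quotient_norms ?(subset_trans sAG) //=.
rewrite -quotient_der // -quotientR ?(subset_trans sAG) // quotientS //.
exact: subset_trans (commgS _ (der_subS k G)) sAkN.
Qed.

Lemma comm_der_eta_step (M N : {group gT}) :
    M <| G -> N <| G -> M \subset N -> cyclic (N / M) ->
  [~: A, G^`(2 * etaA N - 1)] \subset N -> [~: A, G^`(2 * etaA M - 1)] \subset M.
Proof.
move=> nsMG nsNG sMN cycNM sAN.
have [sAAN_M | /subsetPn[y AANy My]] := boolP (A * A^-1 :&: N \subset M).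
  apply: comm_sub_of_mulV_cap sAAN_M _.
  - exact: subset_trans sAG (normal_norm nsMG).
  - exact: subset_trans sAG (normal_norm nsNG).
  - exact: der_sub.
  - apply: subset_trans (commgS _ (der_sub_le _ _)) sAN.
    by rewrite leq_sub2r // leq_mul2l eta_mod_leq.
have lt_eta := eta_mod_ltn norm_mulV mem1_mulV sMN nsNG AANy My.
have eta_gt0 := eta_mod_gt0 G N mem1_mulV.
apply: subset_trans (commgS _ (der_sub_le _ _)) (comm_der_cyclic_factor nsMG nsNG cycNM sAN).
lia.
Qed.

Lemma comm_der_eta_chain s (M : {group gT}) :
    M <| G -> all (fun H : {group gT} => H <| G) s ->
    path (fun H K : {group gT} => (H \subset K) && cyclic (K / H)) M s ->
    last M s = G ->
  [~: A, G^`(2 * etaA M - 1)] \subset M.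
Proof.
elim: s M => [|N s IHs] M nsMG /=; first by move=> _ _ ->; rewrite comm_subG ?der_sub.
case/andP=> nsNG alls /andP[/andP[sMN cycNM] path_s] lastG.
exact: comm_der_eta_step nsMG nsNG sMN cycNM (IHs N nsNG alls path_s lastG).
Qed.

Theorem dl_quotient_cent_supersolvable :
  supersolvable G -> dl (G / 'C_G(A)) <= 2 * eta G (A * A^-1) - 1.
Proof.
case=> s [lastG alls path_s].
have := comm_der_eta_chain (normal1 G) alls path_s lastG.
rewrite eta_mod1; set n := _ - 1 => sAGn1.
have nCG : G \subset 'N('C_G(A)) by rewrite normsI ?normG ?norms_cent.
apply: dl_le_der_trivg; rewrite -quotient_der //; apply/trivgP.
rewrite quotient_sub1 ?(subset_trans (der_sub _ _) nCG) // subsetI der_sub centsC.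
by apply/commG1P/trivgP.
Qed.

End NormalSubset.

Theorem theoremB (gT : finGroupType) (G : {group gT}) (A : {set gT}) :
  supersolvable G -> A \in classes G ->
  dl (G / 'C_G(A)) <= 2 * eta G (A * A^-1) - 1.
Proof.
move=> ssG /imsetP[x Gx ->]; apply: dl_quotient_cent_supersolvable ssG.
- exact: class_subG.
- exact: class_norm.
- by apply/set0Pn; exists x; apply: class_refl.
Qed.
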